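(* Every plane of $\mathcal W(5,q)$ containing a line of $\mathcal S$ is disjoint from $S_\gamma^G$.
   Context: Let $q$ be an even prime power and $\mathrm{PG}(5,q^2)$ have homogeneous coordinates $(X_1,\dots,X_6)$, points written as column vectors. Let $\Sigma$ be the set of points having a coordinate vector $(\alpha,\alpha^q,\delta_0,\beta,\beta^q,\delta_1)$ with $\alpha,\beta\in\mathbb F_{q^2}$, $\delta_0,\delta_1\in\mathbb F_q$ (a Baer subgeometry $\cong\mathrm{PG}(5,q)$). Let $\Pi=\Sigma\cap\{X_6=0\}$, $\mathcal Q=\Sigma\cap\{X_6=0,\ X_3^2+X_1X_5+X_2X_4=0\}$. Fix $\omega\in\mathbb F_{q^2}\setminus\mathbb F_q$ with $\omega+\omega^q=1$ and let $h(X,Y)=\omega X_1Y_4^q+\omega^qX_1Y_6^q+\omega^qX_2Y_5^q+\omega X_2Y_6^q+X_3Y_6^q+\omega^qX_4Y_1^q+\omega X_5Y_2^q+\omega X_6Y_1^q+\omega^qX_6Y_2^q+X_6Y_3^q$. Restricted to $\Sigma$, $P\perp R\iff h(P,R)=0$ defines a symplectic polarity $\perp$ of $\Sigma$; $\mathcal W(5,q)$ is the associated symplectic polar space (generators are totally isotropic planes). For $a,b,c,d\in\mathbb F_{q^2}$ with $ad+bc=1$ let $M_{a,b,c,d}$ be the $6\times6$ matrix with rows $(a^2,0,0,0,c^2,\tfrac{c(a+c\omega^q)}{\omega})$, $(0,a^{2q},0,c^{2q},0,\tfrac{c^q(a^q+c^q\omega)}{\omega^q})$, $(ab,a^qb^q,1,c^qd^q,cd,\tfrac{d(a+c\omega^q)}{\omega}+\tfrac{d^q(a^q+c^q\omega)}{\omega^q}+\tfrac{1}{\omega^{q+1}})$,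 $(0,b^{2q},0,d^{2q},0,\tfrac{d^q(b^q+d^q\omega)+\omega}{\omega^q})$, $(b^2,0,0,0,d^2,\tfrac{d(b+d\omega^q)+\omega^q}{\omega})$, $(0,0,0,0,0,1)$, and let $G$ be the group of projectivities $X\mapsto M_{a,b,c,d}X$. Fix $\gamma\in\mathbb F_{q^2}$ with $X^2+X+\gamma$ irreducible over $\mathbb F_{q^2}$, let $S_\gamma=\left(\frac{\gamma}{\omega},\frac{\gamma^q}{\omega^q},\frac{\omega^q\gamma}{\omega}+\frac{\omega\gamma^q}{\omega^q},1,1,1\right)$ and $S_\gamma^G$ its $G$-orbit. Let $\mathcal S$ be the set of the $q^2+1$ lines $S_t=\{(\lambda,\lambda^q,\lambda t+\lambda^qt^q,\lambda^qt^{2q},\lambda t^2,0):\lambda\in\mathbb F_{q^2}^*\}$, $t\in\mathbb F_{q^2}$, and $S_\infty=\{(0,0,0,\lambda^q,\lambda,0):\lambda\in\mathbb F_{q^2}^*\}$. *)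

From HB Require Import structures.
From mathcomp Require Import all_boot all_order all_algebra all_field.
Set Implicit Arguments. Unset Strict Implicit. Unset Printing Implicit Defensive.
Import GRing.Theory.
Local Open Scope ring_scope.

Section Defs.
Variable F : finFieldType.   (* plays the role of F_{q^2} *)
Variable q : nat.

Definition cj (x : F) : F := x ^+ q.
Definition inFq (x : F) : bool := x ^+ q == x.

Definition mk6 (x1 x2 x3 x4 x5 x6 : F) : 'cV[F]_6 :=
  \col_(i < 6) nth 0 [:: x1; x2; x3; x4; x5; x6] i.

(* the k-th coordinate X_k (k = 1..6) *)
Definition crd (v : 'cV[F]_6) (k : nat) : F := v (inord k.-1) 0.

(* points of PG(5,q^2) given by nonzero vectors; same point = proportional *)
Definition same_point (u v : 'cV[F]_6) : Prop :=
  u != 0 /\ v != 0 /\ exists c : F, u = c *: v.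

Definition inSigma (v : 'cV[F]_6) : Prop :=
  v != 0 /\ exists (c a b d0 d1 : F), inFq d0 /\ inFq d1 /\
    v = c *: mk6 a (cj a) d0 b (cj b) d1.

Definition hform (w : F) (X Y : 'cV[F]_6) : F :=
  w * crd X 1 * cj (crd Y 4) + cj w * crd X 1 * cj (crd Y 6)
  + cj w * crd X 2 * cj (crd Y 5) + w * crd X 2 * cj (crd Y 6)
  + crd X 3 * cj (crd Y 6) + cj w * crd X 4 * cj (crd Y 1)
  + w * crd X 5 * cj (crd Y 2) + w * crd X 6 * cj (crd Y 1)
  + cj w * crd X 6 * cj (crd Y 2) + crd X 6 * cj (crd Y 3).

Definition in_span3 (u1 u2 u3 v : 'cV[F]_6) : Prop :=
  exists k1 k2 k3 : F, v = k1 *: u1 + k2 *: u2 + k3 *: u3.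

Definition indep3 (u1 u2 u3 : 'cV[F]_6) : Prop :=
  forall k1 k2 k3 : F, k1 *: u1 + k2 *: u2 + k3 *: u3 = 0 ->
    k1 = 0 /\ k2 = 0 /\ k3 = 0.

Definition plane_pt (u1 u2 u3 v : 'cV[F]_6) : Prop :=
  inSigma v /\ in_span3 u1 u2 u3 v.

Definition W_plane (w : F) (u1 u2 u3 : 'cV[F]_6) : Prop :=
  [/\ inSigma u1, inSigma u2, inSigma u3, indep3 u1 u2 u3 &
      forall P R, plane_pt u1 u2 u3 P -> plane_pt u1 u2 u3 R -> hform w P R = 0].

Definition Mabcd (w a b c d : F) : 'M[F]_6 :=
  let rows := [::
    [:: a ^+ 2; 0; 0; 0; c ^+ 2; c * (a + c * cj w) / w];
    [:: 0; cj a ^+ 2; 0; cj c ^+ 2; 0; cj c * (cj a + cj c * w) / cj w];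
    [:: a * b; cj a * cj b; 1; cj c * cj d; c * d;
        d * (a + c * cj w) / w + cj d * (cj a + cj c * w) / cj w
        + 1 / (w * cj w)];
    [:: 0; cj b ^+ 2; 0; cj d ^+ 2; 0; (cj d * (cj b + cj d * w) + w) / cj w];
    [:: b ^+ 2; 0; 0; 0; d ^+ 2; (d * (b + d * cj w) + cj w) / w];
    [:: 0; 0; 0; 0; 0; 1] ] in
  \matrix_(i < 6, j < 6) nth 0 (nth [::] rows i) j.

Definition Sgamma (w g : F) : 'cV[F]_6 :=
  mk6 (g / w) (cj g / cj w) (cj w * g / w + w * cj g / cj w) 1 1 1.

Definition in_SgG (w g : F) (v : 'cV[F]_6) : Prop :=
  exists a b c d : F, a * d + b * c = 1 /\ same_point v (Mabcd w a b c d *m Sgamma w g).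

(* representative vectors of the points of the line S_t (t = None is infinity) *)
Definition Sline (t : option F) (l : F) : 'cV[F]_6 :=
  match t with
  | Some t => mk6 l (cj l) (l * t + cj l * cj t) (cj l * cj t ^+ 2) (l * t ^+ 2) 0
  | None => mk6 0 0 0 (cj l) l 0
  end.

End Defs.

(** Let [v] be a point of the orbit lying in a totally isotropic plane through a
    line [S_t].  Then [v] is perpendicular to the two points [S_t(1)] and [S_t(w)];
    since [h(v, S_t(l)) = l A + l^q B] and [w <> w^q], this forces [A = 0].  For
    [v = M_{a,b,c,d} S_gamma], in characteristic 2, [A] equals the quadratic form
    [g x^2 + x y + y^2] evaluated at a pair [(x, y)] that [ad + bc = 1] keeps away
    from [(0, 0)]; the form is anisotropic because [X^2 + X + g] is irreducible. *)

From HB Require Import structures.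
From mathcomp Require Import all_boot all_order all_algebra all_field.
From mathcomp Require Import ring.
Set Implicit Arguments. Unset Strict Implicit. Unset Printing Implicit Defensive.
Import GRing.Theory.
Local Open Scope ring_scope.

Lemma quadratic_anisotropic (F : fieldType) (g x y : F) :
  irreducible_poly ('X^2 + 'X + g%:P : {poly F}) ->
  g * x ^+ 2 + x * y + y ^+ 2 = 0 -> x = 0 /\ y = 0.
Proof.
move=> [_ irr] Q0; have [x0 | xn0] := eqVneq x 0.
  by move: Q0; rewrite x0 expr0n mulr0 mul0r !add0r => /eqP; rewrite expf_eq0 => /eqP.
exfalso.
have root_yx : root ('X^2 + 'X + g%:P) (y / x).
  rewrite /root !hornerE.
  have -> : (y / x) ^+ 2 + y / x + g = (g * x ^+ 2 + x * y + y ^+ 2) / x ^+ 2.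
    by field.
  by rewrite Q0 mul0r.
have /eqp_size : 'X - (y / x)%:P %= 'X^2 + 'X + g%:P.
  by apply: irr; rewrite ?size_XsubC ?dvdp_XsubCl.
by rewrite size_XsubC -addrA size_polyDl ?size_polyXn ?size_XaddC.
Qed.

Lemma lin2_eq0 (F : fieldType) (w w' A B : F) :
  w != w' -> A + B = 0 -> w * A + w' * B = 0 -> A = 0.
Proof.
move=> ww' AB0 wAB0; apply: (mulfI (_ : w - w' != 0)); first by rewrite subr_eq0.
have -> : (w - w') * A = w * A + w' * B - w' * (A + B) by ring.
by rewrite wAB0 AB0 !mulr0 subr0.
Qed.

Section Frobenius.
Variables (F : finFieldType) (q : nat).

Lemma cjK : #|F| = (q ^ 2)%N -> forall x : F, cj q (cj q x) = x.
Proof. by move=> cardF x; rewrite /cj -exprM -[(q * q)%N]/(q ^ 2)%N -cardF expf_card. Qed.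

Lemma cjD e : 2 \in [pchar F] -> q = (2 ^ e)%N ->
  forall x y : F, cj q (x + y) = cj q x + cj q y.
Proof.
move=> char2 -> x y; apply: exprDn_pchar.
by rewrite (eq_pnat _ (pcharf_eq char2)) pnatX pnat_id.
Qed.

Lemma cj0 : (0 < q)%N -> cj q (0 : F) = 0.
Proof. by rewrite /cj expr0n; case: q. Qed.

Lemma cj1 : cj q (1 : F) = 1.
Proof. by rewrite /cj expr1n. Qed.

Lemma cjM (x y : F) : cj q (x * y) = cj q x * cj q y.
Proof. by rewrite /cj exprMn. Qed.

Lemma cjX (x : F) : cj q (x ^+ 2) = cj q x ^+ 2.
Proof. by rewrite /cj exprAC. Qed.

End Frobenius.

Section Coordinates.
Variables (F : finFieldType) (q : nat).

Lemma crd_mk6 (x1 x2 x3 x4 x5 x6 : F) k : (0 < k <= 6)%N ->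
  crd (mk6 x1 x2 x3 x4 x5 x6) k = nth 0 [:: x1; x2; x3; x4; x5; x6] k.-1.
Proof. by case/andP=> k0 k6; rewrite /crd /mk6 !mxE inordK // prednK. Qed.

Lemma crdZ (k : F) X j : crd (k *: X) j = k * crd X j.
Proof. by rewrite /crd mxE. Qed.

Lemma hformZ (w k : F) X Y : hform q w (k *: X) Y = k * hform q w X Y.
Proof. by rewrite /hform !crdZ; ring. Qed.

Variables (w a b c d g : F).
Let orbit_pt := Mabcd q w a b c d *m Sgamma q w g.

Let crd_orbit k : crd orbit_pt k =
  \sum_(j < 6) Mabcd q w a b c d (inord k.-1) j * Sgamma q w g j 0.
Proof. by rewrite /crd mxE. Qed.

Lemma crd_orbit1 :
  crd orbit_pt 1 = a ^+ 2 * (g / w) + c ^+ 2 + c * (a + c * cj q w) / w.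
Proof. by rewrite crd_orbit !big_ord_recl big_ord0 /Mabcd /Sgamma /mk6 !mxE !inordK //=; ring. Qed.

Lemma crd_orbit5 :
  crd orbit_pt 5 = b ^+ 2 * (g / w) + d ^+ 2 + (d * (b + d * cj q w) + cj q w) / w.
Proof. by rewrite crd_orbit !big_ord_recl big_ord0 /Mabcd /Sgamma /mk6 !mxE !inordK //=; ring. Qed.

Lemma crd_orbit6 : crd orbit_pt 6 = 1.
Proof. by rewrite crd_orbit !big_ord_recl big_ord0 /Mabcd /Sgamma /mk6 !mxE !inordK //=; ring. Qed.

End Coordinates.

Section LinePerp.
Variables (F : finFieldType) (q : nat) (w : F).
Hypotheses (q_gt0 : (0 < q)%N) (cjqK : forall x : F, cj q (cj q x) = x)
  (cjqD : forall x y : F, cj q (x + y) = cj q x + cj q y).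

(* The coefficient of [l] in the semilinear map [l |-> h(X, S_t(l))]. *)
Definition sline_coef (t : option F) (X : 'cV[F]_6) : F :=
  if t is Some t then w * crd X 1 * t ^+ 2 + w * crd X 5 + cj q w * crd X 6 + crd X 6 * t
  else w * crd X 1.

Lemma hform_Sline t X :
  exists B, forall l, hform q w X (Sline q t l) = l * sline_coef t X + cj q l * B.
Proof.
case: t => [t|]; [exists (cj q w * crd X 2 * cj q t ^+ 2 + cj q w * crd X 4
  + w * crd X 6 + crd X 6 * cj q t) | exists (cj q w * crd X 2)] => l;
  rewrite /hform /Sline /sline_coef !crd_mk6 //= cj0 // ?cjqD ?cjM ?cjX ?cjM !cjqK; ring.
Qed.

Lemma sline_coef_eq0 t X : w != cj q w ->
  hform q w X (Sline q t 1) = 0 -> hform q w X (Sline q t w) = 0 -> sline_coef t X = 0.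
Proof.
move=> wcw; have [B hB] := hform_Sline t X; rewrite !hB cj1 !mul1r.
exact: lin2_eq0.
Qed.

End LinePerp.

Section OrbitCoef.
Variables (F : finFieldType) (q : nat) (w a b c d g : F).
Hypotheses (char2 : 2%:R = 0 :> F) (w_cw : w + cj q w = 1) (w_neq0 : w != 0)
  (det1 : a * d + b * c = 1).

Definition orbit_pair (t : option F) : F * F :=
  if t is Some t then (t * a + b, t * c + d) else (a, c).

Lemma sline_coef_orbit t : let: (x, y) := orbit_pair t in
  sline_coef q w t (Mabcd q w a b c d *m Sgamma q w g) = g * x ^+ 2 + x * y + y ^+ 2.
Proof.
have cw : cj q w = 1 - w by rewrite -w_cw; ring.
case: t => [t|] /=; rewrite crd_orbit1 ?crd_orbit5 ?crd_orbit6 cw; last by field.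
apply/eqP; rewrite -subr_eq0; set lhs := (X in X - _).
have -> : lhs - (g * (t * a + b) ^+ 2 + (t * a + b) * (t * c + d) + (t * c + d) ^+ 2) =
    2%:R * (1 - w - t * a * b * g - t * c * d) + t * (1 - (a * d + b * c)).
  by rewrite /lhs; field.
by rewrite det1 char2 subrr mulr0 mul0r addr0.
Qed.

Lemma orbit_pair_neq0 t : let: (x, y) := orbit_pair t in ~ (x = 0 /\ y = 0).
Proof.
have /eqP one_neq0 := oner_neq0 F.
case: t => [t|] /= [x0 y0]; apply: one_neq0; rewrite -det1; last first.
  by rewrite x0 y0 !mul0r mulr0 addr0.
have -> : a * d + b * c = a * (t * c + d) + (t * a + b) * c - 2%:R * (t * a * c) by ring.
by rewrite x0 y0 char2 !mul0r mulr0 add0r subr0.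
Qed.

End OrbitCoef.

Theorem mainTheorem15
  (e : nat) (he : (0 < e)%N) (q : nat) (hq : q = (2 ^ e)%N)
  (F : finFieldType) (hF : #|F| = (q ^ 2)%N)
  (w : F) (hw1 : ~~ inFq q w) (hw2 : w + cj q w = 1)
  (g : F) (hg : irreducible_poly ('X^2 + 'X + g%:P : {poly F}))
  (u1 u2 u3 : 'cV[F]_6) (hpl : W_plane q w u1 u2 u3)
  (t : option F)
  (hline : forall l : F, l != 0 -> plane_pt q u1 u2 u3 (Sline q t l)) :
  forall v : 'cV[F]_6, plane_pt q u1 u2 u3 v -> ~ in_SgG q w g v.
Proof.
have char2 : 2 \in [pchar F] by apply: (@card_finPcharP _ 2 (e * 2)); rewrite // hF hq expnM.
have two0 : 2%:R = 0 :> F := pcharf0 char2.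
have q_gt0 : (0 < q)%N by rewrite hq expn_gt0.
have w_neq0 : w != 0.
  by apply/eqP=> w0; move/eqP: hw2; rewrite w0 cj0 // addr0 eq_sym oner_eq0.
have w_neq_cw : w != cj q w.
  by apply/eqP=> wcw; move/eqP: hw2; rewrite -wcw -mulr2n -mulr_natr two0 mulr0 eq_sym oner_eq0.
move=> v hv [a [b [c [d [det1 [v0 [_ [k vE]]]]]]]]; subst v.
have k0 : k != 0 by apply: contraNneq v0 => ->; rewrite scale0r.
case: hpl => _ _ _ _ isotropic.
have perp l : l != 0 -> hform q w (Mabcd q w a b c d *m Sgamma q w g) (Sline q t l) = 0.
  move=> l0; have /eqP := isotropic _ _ hv (hline l l0).
  by rewrite hformZ mulf_eq0 (negPf k0) => /eqP.
have := sline_coef_eq0 q_gt0 (cjK hF) (cjD char2 hq) w_neq_cw (perp 1 (oner_neq0 F)) (perp w w_neq0).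
have := sline_coef_orbit g two0 hw2 w_neq0 det1 t; have := orbit_pair_neq0 two0 det1 t.
case: (orbit_pair a b c d t) => x y pair0 -> /(quadratic_anisotropic hg).
exact: pair0.
Qed.
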